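(* Let $N\ge 3$ and let $a,b$ be positive integers with $1<b/a\le N-1$. Then there is an $N$-dimensional subspace $V\subset S_{b-a}$ (and hence a general $N$-dimensional subspace $V\subset S_{b-a}$ has the same property) such that $\mu_V(W)\ge b/a$ for every nonzero linear subspace $W\subset S_{a-1}$.
   Context: Over $\mathbb{C}$, $S_a$ denotes the space of polynomials in one variable $u$ of degree at most $a$. For subspaces $V,W$, $V\cdot W$ is the span of products $fg$ ($f\in V$, $g\in W$), and for nonzero $W\subset S_{a-1}$, $\mu_V(W)=\dim(V\cdot W)/\dim W$. ''General'' means in a nonempty Zariski-open subset of the Grassmannian $\mathrm{Gr}(N,S_{b-a})$. *)

From HB Require Import structures.
From mathcomp Require Import all_boot all_order all_algebra.
Set Implicit Arguments. Unset Strict Implicit. Unset Printing Implicit Defensive.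
Import Order.TTheory GRing.Theory Num.Theory.
Local Open Scope ring_scope.

(* S_d, the polynomials in u of degree <= d, is modelled by its coefficient
   space 'rV[F]_d.+1 (row vector v <-> rVpoly v = \sum_i v_i u^i). *)
Section PolySpaces.
Variable F : fieldType.

Definition polyMul (m n : nat) (f : 'rV[F]_m.+1) (g : 'rV[F]_n.+1)
  : 'rV[F]_(m + n).+1 := poly_rV (rVpoly f * rVpoly g).

(* V . W : the span of all products f g (f in V, g in W); by bilinearity it is
   the span of the products of basis vectors. *)
Definition prodsp (m n : nat) (V : {vspace 'rV[F]_m.+1})
  (W : {vspace 'rV[F]_n.+1}) : {vspace 'rV[F]_(m + n).+1} :=
  <<[seq polyMul f g | f <- vbasis V, g <- vbasis W]>>%VS.

Definition mu (m n : nat) (V : {vspace 'rV[F]_m.+1})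
  (W : {vspace 'rV[F]_n.+1}) : rat :=
  (\dim (prodsp V W))%:R / (\dim W)%:R.
End PolySpaces.

From mathcomp Require Import all_boot all_order all_algebra zify.
Set Implicit Arguments. Unset Strict Implicit. Unset Printing Implicit Defensive.

(* Take V spanned by monomials u^e, e in a set E of N exponents.  If D is the
   set of degrees of the elements of W, then |D| = dim W, D lies in [0, a), and
   V.W contains polynomials of every degree in E + D, so it suffices that
   b |D| <= a |(E + D) /\ [0, b)| for every D in [0, a).  Writing
   b = (m + 1) a + r with r < a, E contains the translates r + j a (1 <= j <= m),
   each of which contributes a full copy of D, and the three shifts
   0, r - (a mod r), r settle the base case b = a + r by a discharging argument
   over the residue classes mod r: each nonempty class of D gains a new element
   through the shift by r, and the shift by r - (a mod r) moves each class into
   another one. *)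

Definition count_below (n : nat) (P : pred nat) : nat := \sum_(0 <= i < n) P i.

Lemma count_belowD k n P :
  count_below (k + n) P = count_below k P + count_below n (fun x => P (k + x)).
Proof.
rewrite /count_below (@big_cat_nat _ _ _ k) ?leq_addr //=; congr (_ + _).
by rewrite -{1}(add0n k) big_addn addKn; apply: eq_bigr => i _; rewrite addnC.
Qed.

Lemma sub_count_below n (P Q : pred nat) :
  (forall x, x < n -> P x -> Q x) -> count_below n P <= count_below n Q.
Proof.
move=> PQ; rewrite /count_below big_nat_cond [X in _ <= X]big_nat_cond.
apply: leq_sum => i /andP [/andP [_ lt_in] _].
by case: (P i) (PQ i lt_in) => // ->.
Qed.

Lemma leq_count_below n m P : n <= m -> count_below n P <= count_below m P.
Proof. by move=> le_nm; rewrite -(subnKC le_nm) count_belowD leq_addr. Qed.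

Lemma count_below_ltn n (P Q : pred nat) x0 :
  (forall x, x < n -> P x -> Q x) -> x0 < n -> Q x0 -> ~~ P x0 ->
  count_below n P < count_below n Q.
Proof.
move=> PQ lt_x0n Qx0 nPx0.
rewrite /count_below !big_mkord (bigD1 (Ordinal lt_x0n)) //=.
rewrite [X in _ < X](bigD1 (Ordinal lt_x0n)) //= Qx0 (negbTE nPx0) add0n add1n ltnS.
by apply: leq_sum => i _; case: (P i) (PQ i (ltn_ord i)) => // ->.
Qed.

Lemma count_below_gt0 n P : 0 < count_below n P -> exists2 x, x < n & P x.
Proof.
elim: n => [|n IHn]; first by rewrite /count_below big_geq.
rewrite /count_below big_nat_recr //= -/(count_below n P); case Pn: (P n).
  by move=> _; exists n.
by rewrite addn0 => /IHn [x lt_xn Px]; exists x => //; apply: ltnW.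
Qed.

Lemma count_below_bounded n m (P : pred nat) :
  (forall x, P x -> x < n) -> n <= m -> count_below m P = count_below n P.
Proof.
move=> Pn le_nm; rewrite -(subnKC le_nm) count_belowD [X in _ + X]big1 ?addn0 // => i _.
by case Pi: (P (n + i)) => //; move: (Pn _ Pi); rewrite ltnNge leq_addr.
Qed.

Lemma count_belowE n P : count_below n P = count P (iota 0 n).
Proof. by rewrite /count_below -sumn_count sumnE big_map /index_iota subn0. Qed.

Lemma count_below_mem n (A : seq nat) :
  uniq A -> all (gtn n) A -> count_below n [in A] = size A.
Proof.
move=> uA ltA; rewrite count_belowE -size_filter; apply: perm_size.
apply: uniq_perm; rewrite ?filter_uniq ?iota_uniq // => x.
rewrite mem_filter mem_iota /=; case xA: (x \in A) => //=.
by move/allP: ltA => /(_ x xA).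
Qed.

Lemma count_below_mod a r rho : rho < r ->
  count_below a (fun x => x %% r == rho) = a %/ r + (rho < a %% r).
Proof.
move=> lt_rho_r; elim: a => [|a IHa].
  by rewrite /count_below big_geq // div0n mod0n.
rewrite /count_below big_nat_recr //= -/(count_below a _) IHa.
have := ltn_pmod a (leq_ltn_trans (leq0n _) lt_rho_r).
have := ltn_pmod a.+1 (leq_ltn_trans (leq0n _) lt_rho_r).
have := divn_eq a r; have := divn_eq a.+1 r.
case: (a %% r =P rho) => [<-|ne]; nia.
Qed.

Lemma count_below_classes n r P : 0 < r ->
  count_below n P = \sum_(rho < r) count_below n (fun x => P x && (x %% r == rho)).
Proof.
move=> r_gt0; rewrite /count_below exchange_big /=; apply: eq_bigr => i _.
rewrite (bigD1 (Ordinal (ltn_pmod i r_gt0))) //= eqxx andbT big1 ?addn0 // => j.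
by move=> /negbTE; rewrite -(inj_eq val_inj) /= eq_sym => ->; rewrite andbF.
Qed.

Definition sumset (S : seq nat) (B : pred nat) : pred nat :=
  fun z => has (fun al => (al <= z) && B (z - al)) S.

Lemma sumset_subset (S1 S2 : seq nat) B z :
  {subset S1 <= S2} -> sumset S1 B z -> sumset S2 B z.
Proof. by move=> sub /hasP [al alS h]; apply/hasP; exists al => //; apply: sub. Qed.

Lemma exchange_class_counts (a r : nat) (n t : 'I_r -> nat) (sg : 'I_r -> 'I_r) :
  injective sg -> r < a ->
  (forall rho, 0 < n rho -> n rho < t rho) ->
  (forall rho, n rho <= t (sg rho)) ->
  (forall rho, r * n rho + rho <= a + sg rho) ->
  (a + r) * \sum_(rho < r) n rho <= a * \sum_(rho < r) t rho.
Proof.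
move=> sg_inj lt_ra Hsucc Hshift Hpot.
pose P rho := 0 < n rho.
have sum_sg (g : 'I_r -> nat) : \sum_(rho < r) g (sg rho) = \sum_(rho < r) g rho.
  by rewrite [RHS](reindex_inj sg_inj).
have Ht rho : P rho * (n rho).+1 + ~~ P (sg rho) * n rho <=
              P rho * t rho + ~~ P (sg rho) * t (sg rho).
  have := Hsucc rho; have := Hshift rho; rewrite /P.
  case: (posnP (n rho)) => [-> //|pos]; nia.
(* [P rho * rho] is a potential on the nonempty classes whose total is invariant
   under [sg]. *)
have Hw rho : (a + r) * n rho + P rho * rho <=
              a * (P rho * (n rho).+1 + ~~ P (sg rho) * n rho) + P (sg rho) * sg rho.
  have := Hpot rho; have := ltn_ord (sg rho); rewrite /P.
  case: (posnP (n rho)) => [-> //|pos]; case: (posnP (n (sg rho))) => _; nia.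
have := leq_sum (index_enum _) (fun rho (_ : true) => Hw rho).
rewrite !big_split /= (sum_sg (fun rho => P rho * rho)) leq_add2r -!big_distrr /=.
move=> /leq_trans; apply.
rewrite leq_mul2l; apply/orP; right.
apply: leq_trans (leq_sum (index_enum _) (fun rho (_ : true) => Ht rho)) _.
rewrite big_split /= (sum_sg (fun rho => ~~ P rho * t rho)) -big_split /=.
by apply: leq_sum => rho _; case: (P rho); rewrite /= ?mul1n ?mul0n ?addn0.
Qed.

Section ThreeShifts.
Variables (a r : nat) (B : pred nat).
Hypotheses (r_gt0 : 0 < r) (lt_ra : r < a) (B_lt : forall x, B x -> x < a).

Let s := a %% r.
Let T := sumset [:: 0; r - s; r] B.
Let n rho := count_below a (fun x => B x && (x %% r == rho)).
Let t rho := count_below (a + r) (fun z => T z && (z %% r == rho)).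

(* The largest element of a residue class of [B], shifted by [r], is a new
   element of the same class of [T]. *)
Lemma count_class_succ rho : 0 < n rho -> n rho < t rho.
Proof.
move=> /count_below_gt0 [x _ Px].
have ub i : B i && (i %% r == rho) -> i < a by move=> /andP [/B_lt].
have [x0 /andP [Bx0 /eqP x0_rho] max_x0] :=
  ex_maxnP (ex_intro _ x Px) (fun i Pi => ltnW (ub i Pi)).
rewrite /n -(count_below_bounded ub (leq_addr r a)).
apply: (@count_below_ltn _ _ _ (x0 + r)).
- move=> y _ /andP [By ->]; rewrite andbT.
  by apply/hasP; exists 0; rewrite ?inE ?subn0.
- by rewrite ltn_add2r B_lt.
- rewrite modnDr x0_rho eqxx andbT.
  by apply/hasP; exists r; rewrite ?inE ?eqxx ?orbT // leq_addl addnK.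
- by apply/negP => /max_x0; rewrite -{2}(addn0 x0) leq_add2l leqNgt r_gt0.
Qed.

Lemma count_class_shift rho : n rho <= t ((rho + (r - s)) %% r).
Proof.
have le_rsa : r - s + a <= a + r by rewrite addnC leq_add2l leq_subr.
apply: leq_trans (leq_count_below _ le_rsa); rewrite count_belowD.
apply: leq_trans (leq_addl _ _); apply: sub_count_below => x _ /andP [Bx /eqP x_rho].
rewrite -modnDmr x_rho [r - s + rho]addnC eqxx andbT.
by apply/hasP; exists (r - s); rewrite ?inE ?eqxx ?orbT // leq_addr addKn.
Qed.

Lemma count_class_bound rho : rho < r -> n rho <= a %/ r + (rho < s).
Proof.
by move=> lt_rho_r; rewrite -count_below_mod //; apply: sub_count_below => x _ /andP [].
Qed.

Lemma class_potential rho : rho < r -> r * n rho + rho <= a + (rho + (r - s)) %% r.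
Proof.
move=> lt_rho_r; have := count_class_bound lt_rho_r.
have := divn_eq a r; have : s < r by apply: ltn_pmod.
rewrite -/s; set q := a %/ r => lt_sr a_eq.
case: (ltnP rho s) => le_s_rho /= bound.
  by rewrite modn_small; nia.
have -> : rho + (r - s) = rho - s + r by lia.
by rewrite modnDr modn_small; nia.
Qed.

Lemma count_sumset_three : (a + r) * count_below a B <= a * count_below (a + r) T.
Proof.
rewrite (count_below_classes a B r_gt0) (count_below_classes (a + r) T r_gt0).
pose sg (rho : 'I_r) : 'I_r := Ordinal (ltn_pmod (rho + (r - s)) r_gt0).
apply: (@exchange_class_counts _ _ _ _ sg) => //
  [x y /(congr1 val) /= /eqP | rho | rho | rho].
- by rewrite eqn_modDr !modn_small // => /eqP /val_inj.
- exact: count_class_succ.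
- exact: count_class_shift.
- exact: class_potential.
Qed.

End ThreeShifts.

Definition shifts (a r m : nat) : seq nat :=
  [:: 0; r - a %% r; r] ++ [seq r + j * a | j <- iota 1 m].

Lemma count_sumset_shifts a r m (B : pred nat) :
  0 < a -> r < a -> (forall x, B x -> x < a) ->
  (m.+1 * a + r) * count_below a B <=
    a * count_below (m.+1 * a + r) (sumset (shifts a r m) B).
Proof.
move=> a_gt0 lt_ra B_lt; elim: m => [|m IHm].
  rewrite mul1n /shifts cats0; case: (posnP r) => [->|r_gt0]; last first.
    exact: count_sumset_three.
  rewrite !addn0 leq_mul2l; apply/orP; right; apply: sub_count_below => x _ Bx.
  by apply/hasP; exists 0; rewrite ?inE ?subn0.
set c := m.+1 * a + r; have -> : m.+2 * a + r = c + a by rewrite /c; lia.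
rewrite count_belowD mulnDl mulnDr leq_add //.
  apply: leq_trans IHm _; rewrite leq_mul2l; apply/orP; right.
  apply: sub_count_below => x _; apply: sumset_subset => y.
  rewrite !mem_cat => /orP [-> // | /mapP [j]].
  rewrite mem_iota => /andP [j_ge1 j_le] ->; apply/orP; right; apply/mapP.
  by exists j; rewrite // mem_iota j_ge1 ltnS ltnW.
rewrite leq_mul2l; apply/orP; right; apply: sub_count_below => x _ Bx.
apply/hasP; exists (r + m.+1 * a); last by rewrite /c addnC leq_addr addKn.
by rewrite mem_cat; apply/orP; right; apply/mapP; exists m.+1; rewrite // mem_iota ltnSn.
Qed.

Import GRing.Theory.

Section DegreeFiltration.
Local Open Scope ring_scope.
Variables (F : fieldType) (n : nat).
Implicit Types (W : {vspace 'rV[F]_n}) (v : 'rV[F]_n).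

Definition size_leqv (d : nat) : {vspace 'rV[F]_n} :=
  lker (linfun (mulmxr (diag_mx (\row_(j < n) (d <= j)%N%:R)))).

Lemma mem_size_leqv v d : (v \in size_leqv d) = (size (rVpoly v) <= d)%N.
Proof.
rewrite memv_ker lfunE /= mul_mx_diag.
apply/eqP/leq_sizeP => [v0 j le_dj | v0].
  rewrite coef_rVpoly; case: insubP => [i _ ij|] //.
  by have := congr1 (fun M : 'rV[F]_n => M 0 i) v0; rewrite !mxE ij le_dj mulr1.
apply/rowP => j; rewrite !mxE; case: (leqP d j) => le_dj; last by rewrite mulr0.
by rewrite mulr1 -coef_rVpoly_ord v0.
Qed.

Definition filtv W d := (W :&: size_leqv d)%VS.

Lemma mem_filtv W v d : (v \in filtv W d) = (v \in W) && (size (rVpoly v) <= d)%N.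
Proof. by rewrite memv_cap mem_size_leqv. Qed.

Lemma filtv_full W d : (n <= d)%N -> filtv W d = W.
Proof.
move=> le_nd; apply/vspaceP => v; rewrite mem_filtv.
by case: (v \in W) => //=; apply: leq_trans le_nd; apply: size_poly.
Qed.

Lemma filtv0 W : filtv W 0 = 0%VS.
Proof.
apply/vspaceP => v; rewrite mem_filtv memv0 leqn0 size_poly_eq0.
apply/andP/eqP => [[_ /eqP v0]|->]; last by rewrite rpred0 linear0.
by rewrite -(rVpolyK v) v0 linear0.
Qed.

Lemma filtvS W d : (filtv W d <= filtv W d.+1)%VS.
Proof. by apply/subvP => v; rewrite !mem_filtv => /andP [-> /leqW]. Qed.

Definition jump W d := (\dim (filtv W d) < \dim (filtv W d.+1))%N.

(* Rank-nullity for the coefficient of [u^d], whose kernel on [filtv W d.+1]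
   is [filtv W d]. *)
Lemma dim_filtvS_leq W d : (\dim (filtv W d.+1) <= (\dim (filtv W d)).+1)%N.
Proof.
pose e := \row_(j < n) (j == d :> nat)%:R : 'rV[F]_n.
pose g : 'End('rV[F]_n) := linfun (mulmxr (diag_mx e)).
have img_g : (g @: filtv W d.+1 <= <[e]>)%VS.
  apply/subvP => _ /memv_imgP [v _ ->]; rewrite lfunE /= mul_mx_diag.
  apply/vlineP; exists ((rVpoly v)`_d); apply/rowP => j; rewrite !mxE.
  case: eqP => [jd|_]; last by rewrite !mulr0.
  by rewrite !mulr1 -coef_rVpoly_ord jd.
have ker_g : (filtv W d.+1 :&: lker g <= filtv W d)%VS.
  apply/subvP => v; rewrite memv_cap memv_ker lfunE /= !mem_filtv.
  move=> /andP [/andP [-> size_v] /eqP gv0].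
  have coef_d : (rVpoly v)`_d = 0.
    rewrite coef_rVpoly; case: insubP => [i _ id|] //.
    have := congr1 (fun M : 'rV[F]_n => M 0 i) gv0.
    by rewrite mul_mx_diag !mxE id eqxx mulr1.
  apply/leq_sizeP => j; rewrite leq_eqVlt => /orP [/eqP <- // | lt_dj].
  exact: (leq_sizeP _ _ size_v).
rewrite -(limg_ker_dim g (filtv W d.+1)) -[(\dim _).+1]addn1 leq_add ?dimvS //.
by apply: leq_trans (dimvS img_g) _; rewrite dim_vline leq_b1.
Qed.

Lemma dim_filtvS W d : \dim (filtv W d.+1) = (\dim (filtv W d) + jump W d)%N.
Proof.
rewrite /jump; case: ltnP => [lt|le]; last first.
  by rewrite addn0; apply/eqP; rewrite eqn_leq le dimvS ?filtvS.
by apply/eqP; rewrite addn1 eqn_leq lt dim_filtvS_leq.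
Qed.

Lemma dim_filtv W k : \dim (filtv W k) = count_below k (jump W).
Proof.
elim: k => [|k IHk]; first by rewrite filtv0 dimv0 /count_below big_geq.
by rewrite dim_filtvS IHk /count_below big_nat_recr.
Qed.

Lemma dimv_count_jump W k : (n <= k)%N -> \dim W = count_below k (jump W).
Proof. by move=> le_nk; rewrite -dim_filtv filtv_full. Qed.

Lemma leq_count_jump W k : (count_below k (jump W) <= \dim W)%N.
Proof. by rewrite -dim_filtv dimvS ?capvSl. Qed.

Lemma jumpP W d :
  reflect (exists2 w, w \in W & size (rVpoly w) = d.+1) (jump W d).
Proof.
apply: (iffP idP) => [J | [w wW size_w]].
  have : ~~ (filtv W d.+1 <= filtv W d)%VS.
    by apply/negP => /dimvS le_dim; move: J; rewrite /jump ltnNge le_dim.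
  case/subvPn => w; rewrite !mem_filtv => /andP [wW le_w] /nandP [/negP //|lt_w].
  by exists w => //; apply/eqP; rewrite eqn_leq le_w ltnNge.
rewrite /jump ltn_neqAle dimvS ?filtvS // andbT; apply: contraTneq isT => eq_dim.
have /eqP eq_filt : filtv W d == filtv W d.+1 by rewrite eqEdim filtvS eq_dim leqnn.
have : w \in filtv W d.+1 by rewrite mem_filtv wW size_w leqnn.
by rewrite -eq_filt mem_filtv size_w ltnn andbF.
Qed.

Lemma jump_ltn W d : jump W d -> (d < n)%N.
Proof. by move=> /jumpP [w _ <-]; apply: size_poly. Qed.

End DegreeFiltration.

Section MonomialProducts.
Local Open Scope ring_scope.
Variables (F : fieldType) (p q : nat).
Implicit Types (V : {vspace 'rV[F]_p.+1}) (W : {vspace 'rV[F]_q.+1}).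

Lemma polyMul_suml I (s : seq I) (c : I -> F) (f : I -> 'rV[F]_p.+1)
    (g : 'rV[F]_q.+1) :
  polyMul (\sum_(i <- s) c i *: f i) g = \sum_(i <- s) c i *: polyMul (f i) g.
Proof.
rewrite /polyMul linear_sum /= mulr_suml linear_sum; apply: eq_bigr => i _.
by rewrite linearZ /= -scalerAl linearZ.
Qed.

Lemma polyMul_sumr I (s : seq I) (c : I -> F) (f : 'rV[F]_p.+1) (g : I -> 'rV[F]_q.+1) :
  polyMul f (\sum_(i <- s) c i *: g i) = \sum_(i <- s) c i *: polyMul f (g i).
Proof.
rewrite /polyMul linear_sum /= mulr_sumr linear_sum; apply: eq_bigr => i _.
by rewrite linearZ /= -scalerAr linearZ.
Qed.

Lemma polyMul_mem V W f g : f \in V -> g \in W -> polyMul f g \in prodsp V W.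
Proof.
move=> fV gW; rewrite (coord_vbasis fV) (coord_vbasis gW) polyMul_suml.
apply: memv_suml => i _; apply: memvZ; rewrite polyMul_sumr.
apply: memv_suml => j _; apply: memvZ; apply: memv_span.
by apply: allpairs_f; apply: mem_nth; rewrite size_tuple.
Qed.

Definition monorow (al : nat) : 'rV[F]_p.+1 := delta_mx 0 (inord al).

Lemma rVpoly_monorow al : (al <= p)%N -> rVpoly (monorow al) = 'X^al.
Proof. by move=> le_al_p; rewrite rVpoly_delta inordK. Qed.

Lemma size_polyMul_monorow al (w : 'rV[F]_q.+1) d :
  (al <= p)%N -> size (rVpoly w) = d.+1 ->
  size (rVpoly (polyMul (monorow al) w)) = (al + d).+1.
Proof.
move=> le_al_p size_w; have w0 : rVpoly w != 0 by rewrite -size_poly_eq0 size_w.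
have le_dq : (d <= q)%N by rewrite -ltnS -size_w; apply: size_poly.
rewrite /polyMul rVpoly_monorow // mulrC poly_rV_K size_mulXn // size_w ?addnS //.
by rewrite ltnS leq_add.
Qed.

Lemma sumset_jump_prodsp (S : seq nat) V W :
  (forall al, al \in S -> (al <= p)%N && (monorow al \in V)) ->
  forall z, sumset S (jump W) z -> jump (prodsp V W) z.
Proof.
move=> SV z /hasP [al /SV /andP [le_al_p alV] /andP [le_al_z /jumpP [w wW size_w]]].
apply/jumpP; exists (polyMul (monorow al) w); first exact: polyMul_mem.
by rewrite (size_polyMul_monorow le_al_p size_w) subnKC.
Qed.

Lemma dim_span_monorow (A : seq nat) :
  uniq A -> all (fun al => al <= p)%N A -> \dim <<[seq monorow al | al <- A]>> = size A.
Proof.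
move=> uA leA; apply/eqP; rewrite eqn_leq (leq_trans (dim_span _)) ?size_map //=.
rewrite -(@count_below_mem p.+1 A uA); last by apply/allP => al /(allP leA).
rewrite (dimv_count_jump _ (leqnn _)); apply: sub_count_below => al _ alA.
apply/jumpP; exists (monorow al); first by apply: memv_span; apply: map_f.
by rewrite rVpoly_monorow ?size_polyXn //; move/allP: leA; apply.
Qed.

End MonomialProducts.

Lemma dim_prodsp_shifts (F : fieldType) (p a r m : nat)
    (V : {vspace 'rV[F]_p.+1}) (W : {vspace 'rV[F]_(a.-1).+1}) :
  0 < a -> r < a ->
  (forall al, al \in shifts a r m -> (al <= p) && (monorow F p al \in V)%VS) ->
  (m.+1 * a + r) * \dim W <= a * \dim (prodsp V W).
Proof.
move=> a_gt0 lt_ra SV.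
have jumpW_lt x : jump W x -> x < a by move/jump_ltn; rewrite prednK.
rewrite (@dimv_count_jump _ _ W a) ?prednK //.
apply: leq_trans (count_sumset_shifts m a_gt0 lt_ra jumpW_lt) _.
rewrite leq_mul2l; apply/orP; right; apply: leq_trans (leq_count_jump _ (m.+1 * a + r)).
by apply: sub_count_below => z _; apply: sumset_jump_prodsp.
Qed.

Lemma extend_uniq (S : seq nat) L N :
  all (fun x => x <= L) S -> size (undup S) <= N -> N <= L.+1 ->
  exists A : seq nat, [/\ uniq A, size A = N, all (fun x => x <= L) A & {subset S <= A}].
Proof.
move=> leS sizeS le_NL; set k := size (undup S).
set X := [seq x <- iota 0 L.+1 | x \notin S].
exists (undup S ++ take (N - k) X); split.
- rewrite cat_uniq undup_uniq take_uniq ?filter_uniq ?iota_uniq // andbT.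
  by apply/hasP => -[x /mem_take]; rewrite mem_filter mem_undup => /andP [/negP].
- rewrite size_cat size_takel ?subnKC //.
  have count_S : count [in S] (iota 0 L.+1) <= k.
    rewrite -size_filter; apply: uniq_leq_size; first by rewrite filter_uniq ?iota_uniq.
    by move=> x; rewrite mem_filter mem_undup => /andP [].
  have := count_predC [in S] (iota 0 L.+1); rewrite size_iota /X size_filter => count_L.
  apply: (@leq_trans (L.+1 - k)); first exact: leq_sub2r.
  by rewrite leq_subLR -{1}count_L leq_add2r.
- rewrite all_cat; apply/andP; split.
    by apply/allP => x; rewrite mem_undup => /(allP leS).
  apply/allP => x /mem_take; rewrite mem_filter mem_iota => /andP [_ /andP [_]].
  by rewrite add0n ltnS.
- by move=> x xS; rewrite mem_cat mem_undup xS.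
Qed.

Lemma shifts_leq a L : all (fun x => x <= L) (shifts a (L %% a) (L %/ a)).
Proof.
apply/allP => x; rewrite mem_cat !inE => /orP [/or3P [] /eqP -> | /mapP [j]] //.
- exact: leq_trans (leq_subr _ _) (leq_mod _ _).
- exact: leq_mod.
- by rewrite mem_iota => /andP [_ lt_j] ->; have := divn_eq L a; nia.
Qed.

Lemma size_undup_shifts N a L :
  3 <= N -> 0 < a -> L <= (N - 2) * a -> size (undup (shifts a (L %% a) (L %/ a))) <= N.
Proof.
move=> N_ge3 a_gt0 le_L; have L_eq := divn_eq L a.
set r := L %% a; set m := L %/ a; rewrite -/r -/m in L_eq.
case: (posnP r) => [r0|r_gt0]; last first.
  have : m < N - 2 by nia.
  move=> lt_m; apply: leq_trans (size_undup _) _.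
  by rewrite size_cat size_map size_iota /=; lia.
have le_m : m <= N - 2 by nia.
have sub : {subset undup (shifts a r m) <= 0 :: [seq r + j * a | j <- iota 1 m]}.
  move=> x; rewrite mem_undup mem_cat !inE r0 sub0n.
  by case/orP => [/or3P [] -> | ->]; rewrite ?orbT.
apply: leq_trans (uniq_leq_size (undup_uniq _) sub) _.
by rewrite /= size_map size_iota; lia.
Qed.

Local Open Scope ring_scope.
Import Num.Theory.

Lemma ler_ratio_mu (F : fieldType) p q (V : {vspace 'rV[F]_p.+1})
    (W : {vspace 'rV[F]_q.+1}) (a b : nat) :
  (0 < a)%N -> W != 0%VS -> (b * \dim W <= a * \dim (prodsp V W))%N ->
  b%:Q / a%:Q <= mu V W.
Proof.
move=> a_gt0 W0 le_ba; have dimW_gt0 : (0 < \dim W)%N by rewrite lt0n dimv_eq0.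
rewrite /mu ler_pdivrMr ?ltr0n // mulrAC ler_pdivlMr ?ltr0n // -!natrM ler_nat.
by rewrite [X in (_ <= X)%N]mulnC.
Qed.

Unset Implicit Arguments.

Theorem mainTheorem6 (F : closedFieldType) (charF0 : [pchar F] =i pred0)
  (N a b : nat) (hN : (3 <= N)%N) (ha : (0 < a)%N) (hb : (0 < b)%N)
  (hlo : 1 < b%:Q / a%:Q) (hhi : b%:Q / a%:Q <= (N - 1)%N%:Q)
  (hdim : (N <= (b - a).+1)%N) :
  exists V : {vspace 'rV[F]_(b - a).+1},
    \dim V = N /\
    forall W : {vspace 'rV[F]_(a.-1).+1},
      W != 0%VS -> b%:Q / a%:Q <= mu V W.
Proof.
have lt_ab : (a < b)%N by move: hlo; rewrite ltr_pdivlMr ?ltr0n // mul1r ltr_nat.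
have le_bN : (b <= (N - 1) * a)%N.
  by move: hhi; rewrite ler_pdivrMr ?ltr0n // -natrM ler_nat.
have le_L : (b - a <= (N - 2) * a)%N by nia.
have [A [uA sizeA leA shiftsA]] :=
  extend_uniq (shifts_leq a (b - a)) (size_undup_shifts hN ha le_L) hdim.
pose V := <<[seq monorow F (b - a) al | al <- A]>>%VS.
exists V; split; first by rewrite dim_span_monorow.
move=> W W0; apply: ler_ratio_mu => //.
have b_eq : (((b - a) %/ a).+1 * a + (b - a) %% a)%N = b.
  by have := divn_eq (b - a) a; lia.
rewrite -{1}b_eq; apply: dim_prodsp_shifts; rewrite ?ltn_pmod // => al /shiftsA alA.
by rewrite (allP leA) //= memv_span // map_f.
Qed.
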